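(* Let $X$ be a separated metric compact Hausdorff space. A reflexive binary continuous submetric $\gamma$ on $X$ is transitive if and only if for all $x,y\in X$ and $i\in\{0,1\}$, $$\gamma((x,i),(y,1-i))=\inf_{z\in X}\big(\gamma((x,i),(z,1-i))+\gamma((z,i),(y,1-i))\big).$$
   Context: A metric on a set $X$ is a map $d\colon X\times X\to[0,\infty]$ with $d(x,x)=0$ and $d(x,z)\le d(x,y)+d(y,z)$ (not necessarily symmetric, $\infty$ allowed); separated means $d(x,y)=0=d(y,x)$ implies $x=y$. A separated metric compact Hausdorff space is a compact Hausdorff space with a separated metric continuous $X\times X\to[0,\infty]$ for the upper topology on $[0,\infty]$ (open sets $]u,\infty]$); $\mathbf{MetCH_{sep}}$ is the category of these with continuous non-expansive maps. $X+X$ is the coproduct with elements $(x,i)$, $i\in\{0,1\}$, coproduct topology and metric $d((x,i),(y,i))=d(x,y)$, $d((x,i),(y,1-i))=\infty$. A binary continuous submetric on $X$ is a (not necessarily separated) metric $\gamma$ on $X+X$, continuous for the upper topology, below the coproduct metric. Its associated corelation is $\binom{q_0}{q_1}\colon X+X\to S:=(X+X)/{\sim_\gamma}$ where $u\sim_\gamma v$ iff $\gamma(u,v)=\gamma(v,u)=0$, $S$ has quotient topology and metric $([u],[v])\mapsto\gamma(u,v)$, $q_i(x)=[(x,i)]$. $\gamma$ is reflexive if there is a morphism $e\colon S\to X$ with $e q_0=e q_1=1_X$. $\gamma$ is transitive if, with $\lambda_0,\lambda_1\colon S\to P$ the pushout in $\mathbf{MetCH_{sep}}$ of $q_1$ and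 $q_0$ (so $\lambda_0\circ q_1=\lambda_1\circ q_0$), there is a morphism $t\colon S\to P$ with $t\circ q_0=\lambda_0\circ q_0$ and $t\circ q_1=\lambda_1\circ q_1$. *)

From HB Require Import structures.
From mathcomp Require Import all_boot all_order all_algebra generic_quotient.
From mathcomp Require Import all_classical all_reals ereal topology.
Set Implicit Arguments. Unset Strict Implicit. Unset Printing Implicit Defensive.
Import Order.TTheory GRing.Theory Num.Theory.
Local Open Scope classical_set_scope.
Local Open Scope ring_scope.
Local Open Scope ereal_scope.

Section Defs.
Variable R : realType.

(* A (not necessarily symmetric, not necessarily separated) metric with values
   in [0, +oo] (represented in \bar R, nonnegativity required). *)
Definition is_metric (T : Type) (d : T -> T -> \bar R) : Prop :=
  [/\ (forall x y, 0 <= d x y),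
      (forall x, d x x = 0) &
      (forall x y z, d x z <= d x y + d y z)].

Definition separated (T : Type) (d : T -> T -> \bar R) : Prop :=
  forall x y, d x y = 0 -> d y x = 0 -> x = y.

(* Continuity of d : T x T -> [0,+oo] when [0,+oo] carries the upper topology,
   whose open sets are ]u,+oo] (and the whole space). *)
Definition upper_continuous (T : topologicalType) (d : T -> T -> \bar R) : Prop :=
  forall u : \bar R, open [set p : T * T | u < d p.1 p.2].

Record metCH := MetCH {
  mcT :> topologicalType;
  mcd : mcT -> mcT -> \bar R;
  mc_compact : compact [set: mcT];
  mc_hausdorff : hausdorff_space mcT;
  mc_metric : is_metric mcd;
  mc_sep : separated mcd;
  mc_cont : upper_continuous mcd }.

Definition is_hom (A B : topologicalType) (dA : A -> A -> \bar R)
  (dB : B -> B -> \bar R) (f : A -> B) : Prop :=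
  continuous f /\ forall a b, dB (f a) (f b) <= dA a b.

(* The coproduct X + X, with (x,i) := existT _ i x, i : bool (false = 0, true = 1),
   carrying the coproduct (sigma) topology. *)
Definition cfam (X : topologicalType) : bool -> topologicalType := fun _ => X.
Definition XX (X : topologicalType) : topologicalType := {i : bool & cfam X i}.
Definition cinj (X : topologicalType) (i : bool) (x : X) : XX X := existT (cfam X) i x.

Definition coprod_d (X : metCH) (u v : XX X) : \bar R :=
  if projT1 u == projT1 v then mcd (projT2 u) (projT2 v) else +oo.

Record bsubmetric (X : metCH) := BSubmetric {
  gam :> XX X -> XX X -> \bar R;
  gam_metric : is_metric gam;
  gam_cont : upper_continuous gam;
  gam_below : forall u v, gam u v <= coprod_d u v }.

Section Quotient.
Variables (X : metCH) (g : bsubmetric X).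

Definition gam_rel : rel (XX X) := fun u v => `[< g u v = 0 /\ g v u = 0 >].

Lemma gam_rel_refl : reflexive gam_rel.
Proof.
move=> u; apply/asboolP; have [_ h _] := gam_metric g; by rewrite h.
Qed.

Lemma gam_rel_sym : symmetric gam_rel.
Proof. by move=> u v; apply/asboolP/asboolP => -[]. Qed.

Lemma gam_rel_trans : transitive gam_rel.
Proof.
have [h0 _ ht] := gam_metric g.
have z : forall a b c, g a b = 0 -> g b c = 0 -> g a c = 0.
  move=> a b c ab bc; apply/le_anti; rewrite h0 andbT.
  by have := ht a b c; rewrite ab bc adde0.
move=> v u w /asboolP [uv vu] /asboolP [vw wv]; apply/asboolP; split.
  exact: (z _ v).
exact: (z _ v).
Qed.

Canonical gam_equiv := EquivRel gam_rel gam_rel_refl gam_rel_sym gam_rel_trans.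

Definition Sq : topologicalType :=
  quotient_topology {eq_quot gam_equiv}%qT.

Definition piS (u : XX X) : Sq := (\pi_Sq u)%qT.

(* metric on S : ([u],[v]) |-> gamma(u,v) (independent of representatives) *)
Definition dS (a b : Sq) : \bar R := g (repr a) (repr b).

Definition q (i : bool) (x : X) : Sq := piS (cinj i x).

End Quotient.

Definition is_pushout (X S : topologicalType) (dX : X -> X -> \bar R)
  (dSS : S -> S -> \bar R) (f h : X -> S) (P : metCH) (l0 l1 : S -> P) : Prop :=
  [/\ is_hom dSS (@mcd P) l0, is_hom dSS (@mcd P) l1, l0 \o f = l1 \o h &
   forall (Q : metCH) (m0 m1 : S -> Q),
     is_hom dSS (@mcd Q) m0 -> is_hom dSS (@mcd Q) m1 -> m0 \o f = m1 \o h ->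
     exists! k : P -> Q, [/\ is_hom (@mcd P) (@mcd Q) k, k \o l0 = m0 & k \o l1 = m1]].

Definition reflexive_sub (X : metCH) (g : bsubmetric X) : Prop :=
  exists e : Sq g -> X, [/\ is_hom (@dS X g) (@mcd X) e, e \o q g false = id
                                                         & e \o q g true = id].

Definition transitive_sub (X : metCH) (g : bsubmetric X) : Prop :=
  forall (P : metCH) (l0 l1 : Sq g -> P),
    is_pushout (@mcd X) (@dS X g) (q g true) (q g false) l0 l1 ->
    exists t : Sq g -> P, [/\ is_hom (@dS X g) (@mcd P) t,
                              t \o q g false = l0 \o q g false &
                              t \o q g true = l1 \o q g true].

End Defs.

From Pilot Require Import Defs.
From HB Require Import structures.
From mathcomp Require Import all_boot all_order all_algebra generic_quotient.
From mathcomp Require Import all_classical all_reals ereal topology.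
Import Order.TTheory GRing.Theory Num.Theory.
Local Open Scope classical_set_scope.
Local Open Scope ring_scope.
Local Open Scope ereal_scope.

(* The right-hand side is the distance, in the pushout P of q1 and q0, between
   the images of (x,i) in the i-th copy of S and of (y,1-i) in the other one: a
   path from one copy to the other has to pass through a glued point
   l_i (q_(1-i) z) = l_(1-i) (q_i z).  Concretely, P is the quotient of
   (X+X)+(X+X) by the metric that is gamma on each copy and this infimum across
   the copies; reflexivity is what makes the latter satisfy the triangle
   inequality, since it gives gamma((z,0),(z',0)) = d(z,z') = gamma((z,1),(z',1)).
   If gamma is transitive, the map t : S -> P is non-expansive, which bounds
   gamma below by the infimum; reflexivity gives the other inequality.
   Conversely, if the formula holds, then for any pushout (P, l0, l1) the map
   (x,i) |-> l_i (q_i x) is non-expansive by the triangle inequality through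
   the glued points, and it descends to S.  The topological side is that the
   infimum over the compact X of an upper-continuous function is upper
   continuous, and that the metric quotient of a compact space is compact
   Hausdorff, by Wallace's theorem. *)

Lemma continuous_pair {S T U : topologicalType} (f : S -> T) (h : S -> U) :
  continuous f -> continuous h -> continuous (fun x => (f x, h x)).
Proof. by move=> cf ch x; apply: cvg_pair; [exact: cf | exact: ch]. Qed.

Lemma XX_compact {T : topologicalType} : compact [set: T] -> compact [set: XX T].
Proof. by move=> cT; apply: sigT_compact => //; exact: finite_finset. Qed.

Lemma compact_tube {T U : topologicalType} {G : set_system T}
    {PG : ProperFilter G} {L : set U} {W : set (T * U)} : compact L ->
  (forall y, L y -> exists2 A, G A & exists2 B, nbhs y B & A `*` B `<=` W) ->
  exists2 A, G A & exists2 B, set_nbhs L B & A `*` B `<=` W.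
Proof.
move=> /compact_near_coveringP cL LW.
pose slice (A : set T) := [set y | forall x, A x -> W (x, y)].
have : \forall A \near powerset_filter_from G, L `<=` (fun y => nbhs y (slice A)).
  apply: cL => y /LW [A0 GA0 [B0 nB0 A0B0]].
  exists ([set y' | nbhs y' B0], [set A | G A /\ A `<=` A0]).
    by split; [exact: nbhs_interior | exact: powerset_filter_fromP].
  move=> [y' A] [/= nB0y' [_ AA0]]; apply: filterS nB0y' => y'' B0y'' x Ax.
  by apply: (A0B0 (x, y'')); split => //; exact: AA0.
case/near_powerset_filter_fromP => [A A' AA' LA' y /LA'|A GA LA].
  by apply: filterS => y' A'y' x /AA'; exact: A'y'.
by exists A => //; exists (slice A) => // -[x y] [/= Ax]; apply.
Qed.

Lemma compact_setX_tube {T U : topologicalType} {K : set T} {L : set U}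
    {W : set (T * U)} : compact K -> compact L -> open W -> K `*` L `<=` W ->
  exists2 A, set_nbhs K A & exists2 B, set_nbhs L B & A `*` B `<=` W.
Proof.
move=> cK cL oW KLW; have [->|/set0P L0] := eqVneq L set0.
  by exists setT; [exact: filterT | exists set0 => [y []|[? ?] [_ []]]].
have PL := set_nbhs_pfilter L0.
have [B LB [A KA BAW]] : exists2 B, set_nbhs L B &
    exists2 A, set_nbhs K A & B `*` A `<=` (fun p => W (p.2, p.1)).
  apply: compact_tube cK _ => x Kx.
  have [A xA [B LB ABW]] :
      exists2 A, nbhs x A & exists2 B, set_nbhs L B & A `*` B `<=` W.
    apply: compact_tube cL _ => y Ly.
    have [[A B] /= [xA yB] ABW] : nbhs (x, y) W.
      by apply: open_nbhs_nbhs; split => //; exact: KLW.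
    by exists A => //; exists B.
  by exists B => //; exists A => // -[y x'] [/= By Ax']; exact: (ABW (x', y)).
by exists A => //; exists B => // -[x y] [/= Ax By]; exact: (BAW (y, x)).
Qed.

Lemma open_saturated_part {T : topologicalType} (E : T -> T -> Prop) (U : set T) :
  compact [set: T] -> open [set p : T * T | ~ E p.1 p.2] -> open U ->
  open [set x | forall y, E x y -> U y].
Proof.
move=> cT oE oU; rewrite openE => x /= xU.
have [A xA [B TB ABU]] : exists2 A, nbhs x A & exists2 B, set_nbhs [set: T] B &
    A `*` B `<=` (fun p => E p.1 p.2 -> U p.2).
  apply: compact_tube cT _ => y _; have [Uy|nUy] := pselect (U y).
    exists setT; first exact: filterT.
    by exists U => [|[? ?] [_ /=]//]; exact: open_nbhs_nbhs.
  have : nbhs (x, y) [set p : T * T | ~ E p.1 p.2].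
    by apply: open_nbhs_nbhs; split => //= /xU.
  by case=> -[A B] /= [xA yB] ABE; exists A => //; exists B => // p /ABE.
apply: filterS xA => x' Ax' y Ex'y; apply: (ABU (x', y)) => //.
by split => //; exact: nbhs_singleton (TB y I).
Qed.

Section ereal_facts.
Context {R : realType}.
Implicit Types (a b c u v : \bar R) (S : set (\bar R)).

Lemma ereal_dense u v : u < v -> exists r : R, u < r%:E < v.
Proof.
case: u v => [r| |] [s| |] //= uv.
- by exists ((r + s) / 2)%R; rewrite !lte_fin !midf_lt -?lte_fin.
- by exists (r + 1)%R; rewrite ltry lte_fin ltrDl andbT.
- by exists (s - 1)%R; rewrite ltNyr lte_fin gtrDl ltrN10.
- by exists 0%R; rewrite ltNyr ltry.
Qed.

Lemma lte_add_splitP u a b :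
  u < a + b <-> exists r : R, r%:E < a /\ u - r%:E < b.
Proof.
split=> [|[r [ra urb]]]; last first.
  apply: (lt_le_trans (y := b + r%:E)); first by rewrite -lteBlDr.
  by rewrite addeC; apply: leeD => //; exact: ltW.
move=> /ereal_dense[t /andP[ut tab]].
suff [r [ra trb]] : exists r : R, r%:E < a /\ (t - r)%:E < b.
  exists r; split => //; apply: le_lt_trans trb.
  by rewrite EFinB; apply: leeD => //; exact: ltW.
case: a tab => [x| |] tab //.
- have /ereal_dense[s /andP[txs sb]] : (t - x)%:E < b by rewrite EFinB lteBlDl.
  exists (t - s)%R; rewrite opprB subrKC; split => //.
  by rewrite lte_fin in txs; rewrite lte_fin ltrBlDr -ltrBlDl.
- have /ereal_dense[s /andP[_ sb]] : -oo < b.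
    by case: b tab => [? _| |] //; exact: ltNyr.
  by exists (t - s)%R; rewrite ltry opprB subrKC.
Qed.

Lemma lee_add_ereal_inf a c S : 0 <= a -> (forall y, S y -> 0 <= y) ->
  (forall y, S y -> c <= a + y) -> c <= a + ereal_inf S.
Proof.
case: a => [r| |] // a0 S0 cS.
  by rewrite -leeBlDl //; apply/ereal_infP => y Sy; rewrite leeBlDl // cS.
have : 0 <= ereal_inf S by apply/ereal_infP.
by case: (ereal_inf S) => [s| |] //= _; rewrite ?leey.
Qed.

End ereal_facts.

Section lower_semicontinuity.
Context {R : realType}.

(* [upper_continuous d] is, by conversion, [lsc] of the uncurried [d]. *)
Definition lsc {T : topologicalType} (f : T -> \bar R) :=
  forall u, open [set x | u < f x].

Lemma lsc_comp {T U : topologicalType} (phi : T -> U) (f : U -> \bar R) :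
  continuous phi -> lsc f -> lsc (f \o phi).
Proof. by move=> /continuousP cphi lf u; exact: (cphi _ (lf u)). Qed.

Lemma lscD {T : topologicalType} (f h : T -> \bar R) :
  lsc f -> lsc h -> lsc (fun x => f x + h x).
Proof.
move=> lf lh u.
rewrite (_ : [set x | _] = \bigcup_(r in [set: R])
    ([set x | r%:E < f x] `&` [set x | u - r%:E < h x])).
  by apply: bigcup_open => r _; exact: openI.
apply/seteqP; split => x /=; first by move=> /lte_add_splitP[r ?]; exists r.
by move=> [r _ [? ?]]; apply/lte_add_splitP; exists r.
Qed.

Lemma lsc_inf {T K : topologicalType} (G : T -> K -> \bar R) :
  compact [set: K] -> lsc (fun p : T * K => G p.1 p.2) ->
  lsc (fun x => ereal_inf [set G x z | z in [set: K]]).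
Proof.
move=> /compact_near_coveringP cK lG u; rewrite openE => x /=.
move=> /ereal_dense[r /andP[ur rG]].
have : \forall y \near x, [set: K] `<=` (fun z => r%:E < G y z).
  apply: cK => z _; have : nbhs (x, z) [set p | r%:E < G p.1 p.2].
    apply: open_nbhs_nbhs; split; first exact: lG.
    by apply: lt_le_trans rG _; apply: ereal_inf_lbound; exists z.
  case=> -[A B] /= [xA zB] ABG; exists (B, A) => //.
  by move=> -[z' y] [/= ? ?]; exact: (ABG (y, z')).
apply: filterS => y Gy; apply: (lt_le_trans ur).
by apply/ereal_infP => _ [z _ <-]; exact/ltW/Gy.
Qed.

End lower_semicontinuity.

Definition dist0 {R : realType} {T : Type} (d : T -> T -> \bar R) : rel T :=
  fun x y => `[< d x y = 0 /\ d y x = 0 >].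

Lemma dist0P {R : realType} {T : Type} (d : T -> T -> \bar R) x y :
  reflect (d x y = 0 /\ d y x = 0) (dist0 d x y).
Proof. exact: asboolP. Qed.

Section metric_facts.
Context {R : realType} {T : Type} {d : T -> T -> \bar R} (dm : is_metric d).

Lemma metric_ge0 x y : 0 <= d x y. Proof. by case: dm. Qed.
Lemma metric_xx x : d x x = 0. Proof. by case: dm. Qed.
Lemma metric_tri x y z : d x z <= d x y + d y z. Proof. by case: dm. Qed.

Lemma dist0_refl : reflexive (dist0 d).
Proof. by move=> x; apply/dist0P; rewrite metric_xx. Qed.

Lemma dist0_sym : symmetric (dist0 d).
Proof. by move=> x y; apply/dist0P/dist0P => -[]. Qed.

Lemma dist0_trans : transitive (dist0 d).
Proof.
have d0 x y z : d x y = 0 -> d y z = 0 -> d x z = 0.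
  move=> xy yz; apply/le_anti; rewrite metric_ge0 andbT.
  by rewrite -[0]adde0 -{1}xy -yz metric_tri.
move=> y x z /dist0P[xy yx] /dist0P[yz zy].
by apply/dist0P; split; apply: (d0 _ y).
Qed.

Definition metric_equiv : equiv_rel T :=
  EquivRel (dist0 d) dist0_refl dist0_sym dist0_trans.

End metric_facts.

Lemma separated_metric_hausdorff {R : realType} {S : topologicalType}
    {d : S -> S -> \bar R} :
  is_metric d -> Defs.separated d -> upper_continuous d -> hausdorff_space S.
Proof.
move=> dm dsep dcont.
have apart p q : 0 < d p q -> ~ cluster (nbhs p) q.
  move=> pq; have : nbhs (p, q) [set x | 0 < d x.1 x.2].
    by apply: open_nbhs_nbhs; split => //; exact: dcont.
  case=> -[A B] /= [pA qB] AB /(_ A B pA qB)[z [Az Bz]].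
  by have := AB (z, z) (conj Az Bz); rewrite /= metric_xx // ltxx.
move=> p q pq; apply: dsep; apply/eqP; rewrite eq_le metric_ge0 // andbT leNgt.
  by apply/negP => /apart; exact.
apply/negP => /apart; apply => B A qB pA; rewrite setIC; exact: pq.
Qed.

Section metric_quotient.
Context {R : realType} {T : topologicalType} {d : T -> T -> \bar R}
  {e : equiv_rel T}.
Hypotheses (dm : is_metric d)
  (eP : forall s t, reflect (d s t = 0 /\ d t s = 0) (e s t)).

Definition quot_space : topologicalType := quotient_topology {eq_quot e}%qT.
Local Notation Q := quot_space.
Local Notation pi := (\pi_Q)%qT.

Definition quot_dist (a b : Q) : \bar R := d (repr a) (repr b).

Lemma quot_eqP s t : reflect (pi s = pi t) (e s t).
Proof. exact: eqmodP. Qed.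

Lemma repr_quot s : e (repr (pi s)) s.
Proof. by apply/quot_eqP; rewrite reprK. Qed.

Lemma distl_eqv s s' t : e s s' -> d s t = d s' t.
Proof.
move=> /eP[ss' s's]; apply/le_anti/andP; split.
  by apply: le_trans (metric_tri dm s s' t) _; rewrite ss' add0e.
by apply: le_trans (metric_tri dm s' s t) _; rewrite s's add0e.
Qed.

Lemma distr_eqv s t t' : e t t' -> d s t = d s t'.
Proof.
move=> /eP[tt' t't]; apply/le_anti/andP; split.
  by apply: le_trans (metric_tri dm s t' t) _; rewrite t't adde0.
by apply: le_trans (metric_tri dm s t t') _; rewrite tt' adde0.
Qed.

Lemma quot_distE s t : quot_dist (pi s) (pi t) = d s t.
Proof.
by rewrite /quot_dist (distl_eqv _ _ _ (repr_quot s)) (distr_eqv _ _ _ (repr_quot t)).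
Qed.

Lemma quot_dist_metric : is_metric quot_dist.
Proof.
split=> [a b|a|a b c]; rewrite /quot_dist.
- exact: (metric_ge0 dm).
- exact: (metric_xx dm).
- exact: (metric_tri dm).
Qed.

Lemma quot_dist_separated : Defs.separated quot_dist.
Proof. by move=> a b ab ba; rewrite -[a]reprK -[b]reprK; apply/quot_eqP/eP. Qed.

Lemma quot_compact : compact [set: T] -> compact [set: Q].
Proof.
move=> cT; rewrite (_ : [set: Q] = pi @` [set: T]).
  by apply: continuous_compact => //; exact/continuous_subspaceT/pi_continuous.
by apply/seteqP; split => // a _; exists (repr a) => //; exact: reprK.
Qed.

Section compact_quotient.
Hypotheses (cT : compact [set: T]) (dc : upper_continuous d).

Lemma open_not_eqv : open [set p : T * T | ~ e p.1 p.2].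
Proof.
rewrite (_ : [set p | _] = [set p | 0 < d p.1 p.2] `|`
    (@unstable.swap T T @^-1` [set p | 0 < d p.1 p.2])).
  apply: openU; first exact: dc.
  by move/continuousP: (@swap_continuous T T); apply; exact: dc.
apply/seteqP; split => -[s t] /=; last first.
  by move=> + /eP[st ts]; rewrite st ts ltxx; case.
move=> nst; rewrite !lt0e !(metric_ge0 dm) !andbT.
apply: contra_notP nst => /not_orP[/negP/negbNE/eqP ? /negP/negbNE/eqP ?].
exact/eP.
Qed.

Lemma compact_eqv_class s : compact [set t | e s t].
Proof.
apply: (subclosed_compact _ cT) => //; rewrite -openC.
have pair_cont : continuous (fun t : T => (s, t)).
  by apply: continuous_pair => t; [exact: cvg_cst | exact: cvg_id].
have -> : ~` [set t | e s t] = (fun t => (s, t)) @^-1` [set p | ~ e p.1 p.2].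
  by [].
by move/continuousP: pair_cont; apply; exact: open_not_eqv.
Qed.

Definition classes_in (U : set T) : set Q :=
  [set a | forall t, e (repr a) t -> U t].

Lemma open_classes_in U : open U -> open (classes_in U).
Proof.
move=> oU; rewrite /open /= /quotient_open.
rewrite (_ : _ @^-1` _ = [set s | forall t, e s t -> U t]).
  exact: open_saturated_part cT open_not_eqv oU.
by apply/seteqP; split => s /= sU t st; apply: sU;
  rewrite ?(equiv_ltrans (repr_quot s)) // -(equiv_ltrans (repr_quot s)).
Qed.

Lemma quot_dist_upper_continuous : upper_continuous quot_dist.
Proof.
move=> u; rewrite openE => -[a b] /= uab.
have classes_u : [set t | e (repr a) t] `*` [set t | e (repr b) t] `<=`
    [set p | u < d p.1 p.2].
  move=> [s t] [/= es et].
  by rewrite -(distl_eqv _ _ _ es) -(distr_eqv _ _ _ et).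
have [A /set_nbhsP[A' [oA' aA' A'A]] [B /set_nbhsP[B' [oB' bB' B'B]] ABu]] :=
  compact_setX_tube (compact_eqv_class _) (compact_eqv_class _) (dc u) classes_u.
exists (classes_in A', classes_in B').
  by split; apply: open_nbhs_nbhs; split => //; exact: open_classes_in.
move=> [a' b'] [/= a'A' b'B']; apply: (ABu (repr a', repr b')).
by split; [apply/A'A/a'A' | apply/B'B/b'B']; exact: equiv_refl.
Qed.

Lemma quot_hausdorff : hausdorff_space Q.
Proof.
exact: (separated_metric_hausdorff quot_dist_metric quot_dist_separated
  quot_dist_upper_continuous).
Qed.

Definition quot_metCH : metCH R := MetCH (quot_compact cT) quot_hausdorff
  quot_dist_metric quot_dist_separated quot_dist_upper_continuous.

End compact_quotient.

Section quot_lift.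
Context {Z : metCH R} {f : T -> Z}.
Hypothesis f_nonexp : forall s t, mcd (f s) (f t) <= d s t.

Lemma quot_lift_repr s : f (repr (pi s)) = f s.
Proof.
have /eP[rs sr] := repr_quot s; have Zm := mc_metric Z.
apply: (mc_sep (m := Z)); apply/le_anti; rewrite metric_ge0 // andbT.
  by rewrite -rs f_nonexp.
by rewrite -sr f_nonexp.
Qed.

Lemma quot_lift_hom : continuous f -> is_hom quot_dist (@mcd R Z) (f \o repr).
Proof.
move=> fc; split=> [|a b]; last exact: f_nonexp.
apply: repr_comp_continuous => // s t /eqP st.
by rewrite -(quot_lift_repr s) -(quot_lift_repr t) st.
Qed.

End quot_lift.

End metric_quotient.

Section binary_submetric.
Context {R : realType} {X : metCH R} (g : bsubmetric X).

Let gm := gam_metric g.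

Lemma gam_relP u v : reflect (g u v = 0 /\ g v u = 0) (gam_equiv g u v).
Proof. exact: asboolP. Qed.

Lemma dS_pi u v : dS (piS g u) (piS g v) = g u v.
Proof. exact: (quot_distE gm gam_relP). Qed.

Lemma gam_below_same b (x y : X) : g (cinj b x) (cinj b y) <= mcd x y.
Proof. by have := gam_below g (cinj b x) (cinj b y); rewrite /coprod_d /= eqxx. Qed.

Lemma reflexive_dist_le : reflexive_sub g ->
  forall b b' (x y : X), mcd x y <= g (cinj b x) (cinj b' y).
Proof.
move=> [r [[_ r_nonexp] r0 r1]] b b' x y.
have rq c (z : X) : r (q g c z) = z.
  by case: c; [exact: (congr1 (@^~ z) r1) | exact: (congr1 (@^~ z) r0)].
by have := r_nonexp (q g b x) (q g b' y); rewrite !rq /q dS_pi.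
Qed.

(* The distance in the pushout from [u] in the copy [b] of [S] to [v] in the
   other copy, through the glued points [l_b (q_(~~ b) z) = l_(~~ b) (q_b z)]. *)
Definition cross (b : bool) (u v : XX X) : \bar R :=
  ereal_inf [set g u (cinj (~~ b) z) + g (cinj b z) v | z in [set: X]].

Lemma cross_ge0 b u v : 0 <= cross b u v.
Proof. by apply/ereal_infP => _ [z _ <-]; rewrite adde_ge0 ?metric_ge0. Qed.

Definition side_dist (b b' : bool) (u v : XX X) : \bar R :=
  if b == b' then g u v else cross b u v.

Section cocone.
Context {Q : metCH R} (m0 m1 : Sq g -> Q).
Hypotheses (m0_hom : is_hom (@dS R X g) (@mcd R Q) m0)
  (m1_hom : is_hom (@dS R X g) (@mcd R Q) m1)
  (m_comm : m0 \o q g true = m1 \o q g false).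

Definition cocone_map : XX (XX X) -> Q :=
  unstable.sigT_fun (fun b (u : cfam (XX X) b) => (if b then m1 else m0) (piS g u)).

Lemma cocone_map_le b b' u v :
  mcd (cocone_map (cinj b u)) (cocone_map (cinj b' v)) <= side_dist b b' u v.
Proof.
pose m b := if b then m1 else m0.
have m_le c w w' : mcd (m c (piS g w)) (m c (piS g w')) <= g w w'.
  by rewrite -dS_pi; case: c; [exact: m1_hom.2 | exact: m0_hom.2].
rewrite /side_dist; have [<-|bb'] := eqVneq b b'; first exact: m_le.
have {bb'}-> : b' = ~~ b by case: b b' bb' => [] [].
apply/ereal_infP => _ [z _ <-].
have mz : m b (q g (~~ b) z) = m (~~ b) (q g b z).
  by case: b; [exact: (esym (congr1 (@^~ z) m_comm)) | exact: (congr1 (@^~ z) m_comm)].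
apply: le_trans (metric_tri (mc_metric Q) _ (m b (q g (~~ b) z)) _) _.
by apply: leeD; [exact: m_le | rewrite mz; exact: m_le].
Qed.

Lemma cocone_map_continuous : continuous cocone_map.
Proof.
apply: sigT_continuous => -[] u /=; apply: continuous_comp.
- exact: pi_continuous.
- exact: m1_hom.1.
- exact: pi_continuous.
- exact: m0_hom.1.
Qed.

End cocone.

Lemma formula_transitive :
    (forall (x y : X) (i : bool),
       g (cinj i x) (cinj (~~ i) y) = cross i (cinj i x) (cinj (~~ i) y)) ->
  transitive_sub g.
Proof.
move=> g_cross P l0 l1 [l0_hom l1_hom comm _].
pose f := unstable.sigT_fun (fun b (x : cfam X b) =>
  cocone_map l0 l1 (cinj b (cinj b x))) : XX X -> P.
have f_nonexp u v : mcd (f u) (f v) <= g u v.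
  case: u v => [b x] [b' y].
  apply: le_trans (cocone_map_le _ _ l0_hom l1_hom comm b b' _ _) _.
  case: b b' x y => [] [] x y; rewrite /side_dist //=.
    by rewrite (g_cross x y true).
  by rewrite (g_cross x y false).
have f_cont : continuous f.
  apply: sigT_continuous => b x.
  apply: (continuous_comp (f := fun x => cinj b (cinj b x))).
    by apply: continuous_comp; exact: existT_continuous.
  exact: (cocone_map_continuous _ _ l0_hom l1_hom).
exists (f \o repr); split; first exact: (quot_lift_hom gam_relP f_nonexp f_cont).
  by apply/funext => x; exact: (quot_lift_repr gam_relP f_nonexp).
by apply/funext => x; exact: (quot_lift_repr gam_relP f_nonexp).
Qed.

End binary_submetric.

Section canonical_pushout.
Context {R : realType} {X : metCH R} (g : bsubmetric X).
Hypothesis g_refl : reflexive_sub g.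

Let gm := gam_metric g.

Lemma side_swap b (x y : X) :
  g (cinj b x) (cinj b y) <= g (cinj (~~ b) x) (cinj (~~ b) y).
Proof.
exact: le_trans (gam_below_same g b x y) (reflexive_dist_le g g_refl _ _ x y).
Qed.

Lemma gam_le_cross i x y :
  g (cinj i x) (cinj (~~ i) y) <= cross g i (cinj i x) (cinj (~~ i) y).
Proof.
apply/ereal_infP => _ [z _ <-].
apply: le_trans (metric_tri gm _ (cinj (~~ i) z) _) _; apply: leeD => //.
exact: le_trans (gam_below_same g _ z y) (reflexive_dist_le g g_refl _ _ z y).
Qed.

Lemma gam_le_crossD b u v w : g u w <= cross g b u v + cross g (~~ b) v w.
Proof.
have S0 b' u' v' y :
    [set g u' (cinj (~~ b') z) + g (cinj b' z) v' | z in [set: X]] y -> 0 <= y.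
  by move=> [z _ <-]; rewrite adde_ge0 ?(metric_ge0 gm).
rewrite addeC [cross g b u v]/cross.
apply: lee_add_ereal_inf; [exact: cross_ge0 | exact: S0 | move=> _ [z _ <-]].
rewrite addeC [cross _ _ _ _]/cross.
apply: lee_add_ereal_inf; [by rewrite adde_ge0 ?(metric_ge0 gm) | exact: S0 |].
move=> _ [z' _ <-]; rewrite negbK.
apply: le_trans (metric_tri gm u (cinj (~~ b) z) w) _; rewrite -addeA leeD //.
apply: le_trans (metric_tri gm _ (cinj (~~ b) z') w) _; rewrite addeA leeD //.
by apply: le_trans (side_swap (~~ b) z z') _; rewrite negbK metric_tri.
Qed.

Lemma cross_le_gamD b u v w : cross g b u w <= g u v + cross g b v w.
Proof.
apply: lee_add_ereal_inf => [|_ [z _ <-]|_ [z _ <-]]; rewrite ?(metric_ge0 gm) //.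
  by rewrite adde_ge0 ?(metric_ge0 gm).
apply: ge_ereal_inf; exists (g u (cinj (~~ b) z) + g (cinj b z) w) => //.
by rewrite addeA leeD ?(metric_tri gm).
Qed.

Lemma cross_le_Dgam b u v w : cross g b u w <= cross g b u v + g v w.
Proof.
rewrite addeC.
apply: lee_add_ereal_inf => [|_ [z _ <-]|_ [z _ <-]]; rewrite ?(metric_ge0 gm) //.
  by rewrite adde_ge0 ?(metric_ge0 gm).
apply: ge_ereal_inf; exists (g u (cinj (~~ b) z) + g (cinj b z) w) => //.
by rewrite [X in _ <= X]addeC -addeA leeD ?(metric_tri gm).
Qed.

Definition pushout_dist (p p' : XX (XX X)) : \bar R :=
  side_dist g (projT1 p) (projT1 p') (projT2 p) (projT2 p').

Lemma pushout_dist_metric : is_metric pushout_dist.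
Proof.
split.
- move=> [b u] [b' v]; rewrite /pushout_dist /side_dist /=.
  by case: eqP => _; rewrite ?(metric_ge0 gm) ?cross_ge0.
- by move=> [b u]; rewrite /pushout_dist /side_dist /= eqxx (metric_xx gm).
move=> [b1 u] [b2 v] [b3 w]; rewrite /pushout_dist /side_dist /=.
case: b1 u => u; case: b2 v => v; case: b3 w => w /=.
- exact: (metric_tri gm).
- exact: cross_le_gamD.
- exact: (gam_le_crossD true).
- exact: cross_le_Dgam.
- exact: cross_le_Dgam.
- exact: (gam_le_crossD false).
- exact: cross_le_gamD.
- exact: (metric_tri gm).
Qed.

Lemma cross_lsc b : lsc (fun p : XX X * XX X => cross g b p.1 p.2).
Proof.
have g_lsc : lsc (fun p : XX X * XX X => g p.1 p.2) := @gam_cont _ _ g.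
apply: (lsc_inf (fun p z => g p.1 (cinj (~~ b) z) + g (cinj b z) p.2)).
  exact: mc_compact.
apply: lscD.
  apply: (lsc_comp (fun s : (XX X * XX X) * X => (s.1.1, cinj (~~ b) s.2))) g_lsc.
  apply: continuous_pair => s; first exact: continuous_comp cvg_fst cvg_fst.
  exact: continuous_comp cvg_snd (existT_continuous _ _).
apply: (lsc_comp (fun s : (XX X * XX X) * X => (cinj b s.2, s.1.2))) g_lsc.
apply: continuous_pair => s; last exact: continuous_comp cvg_fst cvg_snd.
exact: continuous_comp cvg_snd (existT_continuous _ _).
Qed.

Lemma pushout_dist_upper_continuous : upper_continuous pushout_dist.
Proof.
move=> u; rewrite openE => -[[b x] [b' y]] /= uxy.
have : nbhs (x, y) [set p : XX X * XX X | u < side_dist g b b' p.1 p.2].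
  apply: open_nbhs_nbhs; split => //; rewrite /side_dist.
  by case: eqP => _; [exact: gam_cont | exact: cross_lsc].
case=> -[A B] /= [xA yB] ABu.
exists (existT _ b @` A, existT _ b' @` B); first by split; exact: existT_nbhs.
by move=> [_ _] [/= [x' Ax' <-] [y' By' <-]]; exact: (ABu (x', y')).
Qed.

Definition pushout_equiv := metric_equiv pushout_dist_metric.

Lemma pushout_equivP p p' :
  reflect (pushout_dist p p' = 0 /\ pushout_dist p' p = 0) (pushout_equiv p p').
Proof. exact: dist0P. Qed.

Definition pushout : metCH R := quot_metCH pushout_dist_metric pushout_equivP
  (XX_compact (XX_compact (mc_compact (m := X)))) pushout_dist_upper_continuous.

Definition piP (p : XX (XX X)) : pushout :=
  (\pi_(@quot_space _ pushout_equiv) p)%qT.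

Lemma piP_dist p p' : mcd (piP p) (piP p') = pushout_dist p p'.
Proof. exact: (quot_distE pushout_dist_metric pushout_equivP). Qed.

Lemma piP_eq p p' :
  pushout_dist p p' = 0 -> pushout_dist p' p = 0 -> piP p = piP p'.
Proof. by move=> pp' p'p; apply/quot_eqP/pushout_equivP. Qed.

Definition pushout_inj (b : bool) (a : Sq g) : pushout := piP (cinj b (repr a)).

Lemma pushout_inj_pi b u : pushout_inj b (piS g u) = piP (cinj b u).
Proof.
have /gam_relP[ru ur] := repr_quot (e := gam_equiv g) u.
by apply: piP_eq; rewrite /pushout_dist /side_dist /= eqxx.
Qed.

Lemma pushout_inj_hom b : is_hom (@dS R X g) (@mcd R pushout) (pushout_inj b).
Proof.
split=> [|a a']; last by rewrite piP_dist /pushout_dist /side_dist /= eqxx.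
apply/quotient_continuous.
have -> : pushout_inj b \o \pi_(Sq g)%qT = piP \o cinj b.
  by apply/funext => u; exact: pushout_inj_pi.
move=> u; apply: continuous_comp; first exact: existT_continuous.
exact: pi_continuous.
Qed.

Lemma cross_diag b x : cross g b (cinj (~~ b) x) (cinj b x) = 0.
Proof.
apply/le_anti; rewrite cross_ge0 andbT; apply: ge_ereal_inf; exists 0 => //.
by exists x => //; rewrite !(metric_xx gm) adde0.
Qed.

Lemma pushout_inj_comm :
  pushout_inj false \o q g true = pushout_inj true \o q g false.
Proof.
apply/funext => x /=; rewrite /q !pushout_inj_pi.
by apply: piP_eq; [exact: (cross_diag false) | exact: (cross_diag true)].
Qed.

Lemma pushout_universal (Q : metCH R) (m0 m1 : Sq g -> Q) :
  is_hom (@dS R X g) (@mcd R Q) m0 -> is_hom (@dS R X g) (@mcd R Q) m1 ->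
  m0 \o q g true = m1 \o q g false ->
  exists! k : pushout -> Q, [/\ is_hom (@mcd R pushout) (@mcd R Q) k,
    k \o pushout_inj false = m0 & k \o pushout_inj true = m1].
Proof.
move=> m0_hom m1_hom comm; pose h := cocone_map g m0 m1.
have h_nonexp p p' : mcd (h p) (h p') <= pushout_dist p p'.
  by case: p p' => [b u] [b' v]; exact: (cocone_map_le g _ _ m0_hom m1_hom comm).
have hP b a : h (repr (pushout_inj b a)) = (if b then m1 else m0) a.
  rewrite (quot_lift_repr pushout_equivP h_nonexp).
  exact (congr1 (if b then m1 else m0) (reprK a)).
have h_cont := cocone_map_continuous g _ _ m0_hom m1_hom.
exists (h \o repr); split.
  split; first exact: (quot_lift_hom pushout_equivP h_nonexp h_cont).
    by apply/funext => a; exact: (hP false).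
  by apply/funext => a; exact: (hP true).
move=> k [_ k0 k1]; apply/funext => a.
have [[b u] ->] : exists p, a = piP p by exists (repr a); rewrite /piP reprK.
rewrite -pushout_inj_pi /= hP.
by case: b u => u; [rewrite -k1 | rewrite -k0].
Qed.

Lemma pushout_is_pushout : is_pushout (@mcd R X) (@dS R X g) (q g true) (q g false)
  (pushout_inj false) (pushout_inj true).
Proof.
split; [exact: pushout_inj_hom | exact: pushout_inj_hom | exact: pushout_inj_comm |].
exact: pushout_universal.
Qed.

Lemma transitive_formula : transitive_sub g ->
  forall (x y : X) (i : bool),
    g (cinj i x) (cinj (~~ i) y) = cross g i (cinj i x) (cinj (~~ i) y).
Proof.
move=> g_trans x y i; apply/le_anti; rewrite gam_le_cross /=.
have [t [[_ t_nonexp] t0 t1]] := g_trans _ _ _ pushout_is_pushout.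
have tq b z : t (q g b z) = pushout_inj b (q g b z).
  by case: b; [exact: (congr1 (@^~ z) t1) | exact: (congr1 (@^~ z) t0)].
have := t_nonexp (q g i x) (q g (~~ i) y).
by rewrite !tq /q !pushout_inj_pi piP_dist dS_pi /pushout_dist /side_dist /=; case: i.
Qed.

End canonical_pushout.

Theorem lemma5p7 (R : realType) (X : metCH R) (g : bsubmetric X) :
  reflexive_sub g ->
  (transitive_sub g <->
   forall (x y : X) (i : bool),
     g (cinj i x) (cinj (~~ i) y) =
     ereal_inf ((fun z : X => g (cinj i x) (cinj (~~ i) z) + g (cinj i z) (cinj (~~ i) y)) @` [set: X])).
Proof.
move=> g_refl; split; first exact: transitive_formula.
exact: formula_transitive.
Qed.
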